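(* Let $F:\mathbb{R}^p\to[0,M]$ and $\mathbf{r}=(\mathbf{r}_1,\dots,\mathbf{r}_Z):\mathbb{R}^p\to\mathbb{R}^Z$ be functions, let $B>0$, and let $\Lambda=\{\boldsymbol{\lambda}\in\mathbb{R}_+^{Z}:\|\boldsymbol{\lambda}\|_1\le B\}$. Define $G(w;\boldsymbol{\lambda})=F(w)+\boldsymbol{\lambda}^T\mathbf{r}(w)$ for $w\in\mathbb{R}^p$, $\boldsymbol{\lambda}\in\Lambda$. Let $\nu\ge 0$ and let $(\bar w,\bar{\boldsymbol{\lambda}})\in\mathbb{R}^p\times\Lambda$ be a $\nu$-approximate saddle point of $G$, i.e. $G(\bar w;\bar{\boldsymbol{\lambda}})\le G(w;\bar{\boldsymbol{\lambda}})+\nu$ for all $w\in\mathbb{R}^p$ and $G(\bar w;\bar{\boldsymbol{\lambda}})\ge G(\bar w;\boldsymbol{\lambda})-\nu$ for all $\boldsymbol{\lambda}\in\Lambda$. Assume there exists $w^*\in\mathbb{R}^p$ with $\mathbf{r}(w^* )\le \mathbf{0}_Z$ componentwise. Then $$\max_{1\le j\le Z}\,(\mathbf{r}_j(\bar w))_+\le \frac{M+2\nu}{B},$$ where $x_+=\max\{x,0\}$.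
   Context: In the paper, $F(w)=\frac1K\sum_{k=1}^K\frac1{m_k}\sum_{i=1}^{m_k} l(h_w(x_{k,i}),y_{k,i})$ is the empirical federated risk of a model with parameter $w$ (a nonnegative loss, assumed bounded by $M$), and $\mathbf{r}(w)\le 0$ encodes group-fairness constraints such as Bounded Group Loss; the Lagrangian-type objective is minimized over $w$ and maximized over $\boldsymbol{\lambda}$. *)

From mathcomp Require Import all_boot all_order all_algebra.
Set Implicit Arguments. Unset Strict Implicit. Unset Printing Implicit Defensive.
Import Order.TTheory GRing.Theory Num.Theory.
Local Open Scope ring_scope.

Definition in_Lambda (R : realFieldType) (Z : nat) (B : R) (lam : 'I_Z -> R) : Prop :=
  (forall j, 0 <= lam j) /\ \sum_(j < Z) `|lam j| <= B.

Definition Gfun (R : realFieldType) (W : Type) (Z : nat)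
  (F : W -> R) (r : W -> 'I_Z -> R) (w : W) (lam : 'I_Z -> R) : R :=
  F w + \sum_(j < Z) lam j * r w j.

Definition pos_part (R : realFieldType) (x : R) : R := Num.max x 0.

From mathcomp Require Import all_boot all_order all_algebra.
From mathcomp Require Import lra.
Set Implicit Arguments. Unset Strict Implicit. Unset Printing Implicit Defensive.
Import Order.TTheory GRing.Theory Num.Theory.
Local Open Scope ring_scope.

(* Testing the saddle point against the vertex B e_j of Lambda gives
   G(wbar; lbar) >= F(wbar) + B r_j(wbar) - nu >= B r_j(wbar) - nu, while testing
   it against a feasible wstar gives G(wbar; lbar) <= G(wstar; lbar) + nu <= M + nu,
   because lbar >= 0 and r(wstar) <= 0.  Hence B r_j(wbar) <= M + 2 nu for every j. *)

Section Lagrangian.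

Variables (R : realFieldType) (W : Type) (Z : nat).
Variables (F : W -> R) (r : W -> 'I_Z -> R).

Lemma Gfun_le_objective w lam :
  (forall j, 0 <= lam j) -> (forall j, r w j <= 0) -> Gfun F r w lam <= F w.
Proof.
move=> lam_ge0 rw_le0; rewrite /Gfun gerDl -oppr_ge0 -sumrN.
by apply: sumr_ge0 => j _; rewrite oppr_ge0 mulr_ge0_le0.
Qed.

Definition coord_weight (B : R) (j : 'I_Z) : 'I_Z -> R :=
  fun i => if i == j then B else 0.

Lemma in_Lambda_coord_weight B j : 0 <= B -> in_Lambda B (coord_weight B j).
Proof.
move=> B_ge0; split=> [i|]; first by rewrite /coord_weight; case: ifP.
rewrite (bigD1 j) //= big1 => [|i /negbTE ij]; last by rewrite /coord_weight ij normr0.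
by rewrite /coord_weight eqxx addr0 ger0_norm.
Qed.

Lemma Gfun_coord_weight w B j : Gfun F r w (coord_weight B j) = F w + B * r w j.
Proof.
rewrite /Gfun (bigD1 j) //= big1 => [|i /negbTE ij]; last by rewrite /coord_weight ij mul0r.
by rewrite /coord_weight eqxx addr0.
Qed.

Lemma approx_saddle_violation_le (M B nu : R) wbar lbar j :
  (forall w, 0 <= F w <= M) -> 0 <= B -> in_Lambda B lbar ->
  (forall w, Gfun F r wbar lbar <= Gfun F r w lbar + nu) ->
  (forall lam, in_Lambda B lam -> Gfun F r wbar lam - nu <= Gfun F r wbar lbar) ->
  (exists wstar, forall i, r wstar i <= 0) ->
  B * r wbar j <= M + 2 * nu.
Proof.
move=> F_bnd B_ge0 [lbar_ge0 _] sad_w sad_lam [wstar wstar_feas].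
have G_le : Gfun F r wbar lbar <= M + nu.
  apply: (le_trans (sad_w wstar)); rewrite lerD2r.
  by apply: (le_trans (Gfun_le_objective lbar_ge0 wstar_feas)); case/andP: (F_bnd wstar).
have := sad_lam _ (in_Lambda_coord_weight j B_ge0); rewrite Gfun_coord_weight.
by case/andP: (F_bnd wbar) => F_ge0 _; lra.
Qed.

End Lagrangian.

Lemma bigmax_pos_part_le (R : realFieldType) (Z : nat) (x : 'I_Z -> R) (c : R) :
  0 <= c -> (forall j, x j <= c) -> \big[Num.max/0]_(j < Z) pos_part (x j) <= c.
Proof.
move=> c_ge0 x_le; apply: (big_ind (fun y => y <= c)) => // [y z|j _].
  by rewrite ge_max => -> ->.
by rewrite /pos_part ge_max x_le.
Qed.

Theorem lemma1 (R : realFieldType) (p Z : nat) (M B nu : R)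
  (F : 'rV[R]_p -> R) (r : 'rV[R]_p -> 'I_Z -> R)
  (hF : forall w, 0 <= F w <= M)
  (hB : 0 < B) (hnu : 0 <= nu)
  (wbar : 'rV[R]_p) (lbar : 'I_Z -> R)
  (hlbar : in_Lambda B lbar)
  (hsad1 : forall w, Gfun F r wbar lbar <= Gfun F r w lbar + nu)
  (hsad2 : forall lam, in_Lambda B lam -> Gfun F r wbar lbar >= Gfun F r wbar lam - nu)
  (hfeas : exists wstar : 'rV[R]_p, forall j, r wstar j <= 0) :
  \big[Num.max/0]_(j < Z) pos_part (r wbar j) <= (M + 2 * nu) / B.
Proof.
have M_ge0 : 0 <= M by case/andP: (hF wbar); apply: le_trans.
apply: bigmax_pos_part_le => [|j]; first by apply: divr_ge0; lra.
rewrite ler_pdivlMr // mulrC.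
exact: approx_saddle_violation_le hF (ltW hB) hlbar hsad1 hsad2 hfeas.
Qed.
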